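(* Let $K$ be a field and let $\vec a_{0,1},\dots,\vec a_{0,n},\vec a_{1,1},\dots,\vec a_{1,n}\in K^{n+1}$ satisfy: for every $\vec s=(s_1,\dots,s_n)\in\{0,1\}^n$ and every $k\in\{1,\dots,n\}$, the set $\{\vec a_{s_1,1},\dots,\vec a_{s_n,n},\vec a_{1-s_k,k}\}$ is linearly independent. For $\vec s\in\{0,1\}^n$ let $\vec x_{\vec s}$ be the solution of the equations $\hat a_{s_1,1}=\dots=\hat a_{s_n,n}=0$. If $\vec s\neq\vec r$, then $\vec x_{\vec s}\neq\vec x_{\vec r}$.
   Context: For $\vec a\in K^{n+1}$, $\hat a$ denotes the affine-linear function $\hat a(x_1,\dots,x_n)=\vec a\cdot\vec x$ with $\vec x=(x_1,\dots,x_n,1)$. *)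

From HB Require Import structures.
From mathcomp Require Import all_boot all_order all_algebra.
Set Implicit Arguments. Unset Strict Implicit. Unset Printing Implicit Defensive.
Import GRing.Theory.
Local Open Scope ring_scope.

(* hat a (x_1,...,x_n) = a . (x_1,...,x_n,1) for a in K^(n+1) *)
Definition affine_eval (K : fieldType) (n : nat) (a : 'rV[K]_n.+1) (x : 'rV[K]_n) : K :=
  \sum_(i < n) a 0 (widen_ord (leqnSn n) i) * x 0 i + a 0 ord_max.

Definition flip_family (K : fieldType) (n : nat)
    (a : bool -> 'I_n -> 'rV[K]_n.+1) (s : {ffun 'I_n -> bool}) (k : 'I_n)
    : 'M[K]_n.+1 :=
  \matrix_(i < n.+1) match unlift ord_max i with
                      | Some j => a (s j) j
                      | None => a (~~ s k) k
                      end.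

Definition solves (K : fieldType) (n : nat)
    (a : bool -> 'I_n -> 'rV[K]_n.+1) (s : {ffun 'I_n -> bool}) (x : 'rV[K]_n) : Prop :=
  forall i : 'I_n, affine_eval (a (s i) i) x = 0.

From HB Require Import structures.
From mathcomp Require Import all_boot all_order all_algebra.
Set Implicit Arguments. Unset Strict Implicit. Unset Printing Implicit Defensive.
Import GRing.Theory.
Local Open Scope ring_scope.

(* If x_s = x_r = x, pick k with s_k <> r_k. Then x satisfies the n equations
   indexed by s and also the equation of a_{r_k,k} = a_{1-s_k,k}, so the
   homogenized vector (x, 1) lies in the kernel of the square matrix
   flip_family a s k. That matrix is invertible, while (x, 1) is nonzero. *)

Lemma ffun_neq_exists (aT : finType) (rT : eqType) (f g : {ffun aT -> rT}) :
  f != g -> exists x, f x != g x.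
Proof.
move=> neq_fg; apply/existsP; rewrite -negb_forall; apply: contra neq_fg.
by move=> /forallP eq_fg; apply/eqP/ffunP => x; apply/eqP.
Qed.

Lemma unitmx_mul_eq0 (K : fieldType) (m p : nat) (M : 'M[K]_m) (v : 'M[K]_(m, p)) :
  M \in unitmx -> M *m v = 0 -> v = 0.
Proof. by move=> unitM Mv0; rewrite -(mulKmx unitM v) Mv0 mulmx0. Qed.

Section Homogenization.

Variables (K : fieldType) (n : nat).

Definition homog (x : 'rV[K]_n) : 'cV[K]_n.+1 :=
  \col_l (if unlift ord_max l is Some j then x 0 j else 1).

Lemma homog_neq0 (x : 'rV[K]_n) : homog x != 0.
Proof. by apply/cV0Pn; exists ord_max; rewrite mxE unlift_none oner_eq0. Qed.

Lemma mulmx_homog (b : 'rV[K]_n.+1) (x : 'rV[K]_n) :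
  b *m homog x = (affine_eval b x)%:M.
Proof.
apply/rowP => j; rewrite ord1 !mxE big_ord_recr /= mxE unlift_none mulr1.
congr (_ + _); apply: eq_bigr => i _.
have -> : widen_ord (leqnSn n) i = lift ord_max i.
  by apply/val_inj; rewrite /= /bump leqNgt ltn_ord.
by rewrite mxE liftK.
Qed.

Lemma mulmx_homog_eq0 (m : nat) (M : 'M[K]_(m, n.+1)) (x : 'rV[K]_n) :
  (forall i, affine_eval (row i M) x = 0) -> M *m homog x = 0.
Proof.
move=> Mx0; apply/row_matrixP => i.
by rewrite row_mul mulmx_homog Mx0 row0 raddf0.
Qed.

End Homogenization.

Lemma flip_family_mul_homog (K : fieldType) (n : nat)
    (a : bool -> 'I_n -> 'rV[K]_n.+1) (s : {ffun 'I_n -> bool}) (k : 'I_n)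
    (x : 'rV[K]_n) :
  solves a s x -> affine_eval (a (~~ s k) k) x = 0 ->
  flip_family a s k *m homog x = 0.
Proof.
move=> sol_s sol_flip; apply: mulmx_homog_eq0 => i.
by rewrite rowK; case: (unlift ord_max i).
Qed.

Theorem lemma5 (K : fieldType) (n : nat) (a : bool -> 'I_n -> 'rV[K]_n.+1)
  (hind : forall (s : {ffun 'I_n -> bool}) (k : 'I_n), row_free (flip_family a s k))
  (s r : {ffun 'I_n -> bool}) (xs xr : 'rV[K]_n) :
  solves a s xs -> solves a r xr -> s != r -> xs != xr.
Proof.
move=> sol_s sol_r /ffun_neq_exists[k neq_srk]; apply/eqP => eq_x.
have flip_rk : r k = ~~ s k by move: neq_srk; case: (s k); case: (r k).
have sol_flip : affine_eval (a (~~ s k) k) xs = 0 by rewrite -flip_rk eq_x.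
have unit_flip : flip_family a s k \in unitmx by rewrite -row_free_unit.
move/eqP: (homog_neq0 xs); apply.
exact: unitmx_mul_eq0 unit_flip (flip_family_mul_homog sol_s sol_flip).
Qed.
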